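(* Let $p\in(0,1]$ and let $(\mathcal M,d,0)$ be a pointed $p$-metric space with $\mathcal M=\{0,x,y\}$ (three distinct points). Put $d_x=d(x,0)$, $d_y=d(y,0)$, $d_{xy}=d(x,y)$. Then for all $a,b\in\mathbb R$, \[\|a\delta(x)+b\delta(y)\|_{\mathcal F_p(\mathcal M)}^p=\min\{|ad_x|^p+|bd_y|^p,\ |(a+b)d_x|^p+|bd_{xy}|^p,\ |(a+b)d_y|^p+|ad_{xy}|^p\}.\]
   Context: A $p$-metric space is a set with $d$ such that $d^p$ is a metric; pointed means a distinguished point $0$. A $p$-Banach space is a complete vector space with a $p$-norm. $\delta(x)$ is evaluation at $x$ on real functions on $\mathcal M$ vanishing at $0$, and $\mathcal F_p(\mathcal M)$ is the completion of $\mathrm{span}\{\delta(x)\}$ under $\|\sum a_i\delta(x_i)\|=\sup\|\sum a_if(x_i)\|_Y$ over $p$-Banach $Y$ and $1$-Lipschitz $f:\mathcal M\to Y$ with $f(0)=0$. *)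

From Stdlib Require Import Reals List.
From Coquelicot Require Import Coquelicot.
Open Scope R_scope.

Definition rpow (x p : R) : R := if Rle_dec x 0 then 0 else Rpower x p.

Definition is_pmetric (p : R) {T : Type} (d : T -> T -> R) : Prop :=
  (forall u v, 0 <= d u v) /\
  (forall u v, d u v = 0 <-> u = v) /\
  (forall u v, d u v = d v u) /\
  (forall u v w, rpow (d u w) p <= rpow (d u v) p + rpow (d v w) p).

Record pBanach (p : R) := mkPBanach {
  pb_space :> ModuleSpace R_Ring;
  pb_norm : pb_space -> R;
  pb_nonneg : forall v, 0 <= pb_norm v;
  pb_zero : forall v, pb_norm v = 0 <-> v = zero;
  pb_hom : forall (t : R) v, pb_norm (scal t v) = Rabs t * pb_norm v;
  pb_ptri : forall v w,
      rpow (pb_norm (plus v w)) p <= rpow (pb_norm v) p + rpow (pb_norm w) p;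
  pb_complete : forall u : nat -> pb_space,
      (forall eps, 0 < eps -> exists N : nat, forall m n : nat,
          (N <= m)%nat -> (N <= n)%nat -> pb_norm (minus (u m) (u n)) < eps) ->
      exists l, forall eps, 0 < eps -> exists N : nat, forall n : nat,
          (N <= n)%nat -> pb_norm (minus (u n) l) < eps
}.
Arguments pb_norm {p} _ _.

(* Evaluation of the finite combination sum_i a_i delta(x_i) at f. *)
Definition eval_comb {T : Type} {Y : ModuleSpace R_Ring} (f : T -> Y)
  (mu : list (R * T)) : Y :=
  fold_right (fun c acc => plus (scal (fst c) (f (snd c))) acc) zero mu.

Definition Fp_values (p : R) {T : Type} (d : T -> T -> R) (z : T)
  (mu : list (R * T)) : R -> Prop :=
  fun t => exists (Y : pBanach p) (f : T -> Y),
      f z = zero /\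
      (forall u v, pb_norm Y (minus (f u) (f v)) <= d u v) /\
      t = pb_norm Y (eval_comb f mu).

(* The F_p(M) norm of sum a_i delta(x_i): the supremum of the above set. *)
Definition Fp_norm (p : R) {T : Type} (d : T -> T -> R) (z : T)
  (mu : list (R * T)) : Rbar :=
  Lub_Rbar (Fp_values p d z mu).

From Stdlib Require Import Reals List Lra Lia Psatz Classical ClassicalDescription.
From Coquelicot Require Import Coquelicot.
Open Scope R_scope.

(* Writing [a δ(x) + b δ(y) = (a - t) δ(x) + (b + t) δ(y) + t (δ(x) - δ(y))], the
   p-triangle inequality bounds [‖a δ(x) + b δ(y)‖^p] by the cost
   [|a - t|^p d_x^p + |b + t|^p d_y^p + |t|^p d_xy^p] for every real [t].  As a function
   of [t] this cost is concave between consecutive breakpoints among [0, -b, a] and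
   monotone outside them, so its infimum is attained at a breakpoint: this is the
   three-term minimum.  Conversely, being the infimum over [t] of a cost that is jointly
   p-subadditive in [(t, a, b)], the minimum is the p-th power of a p-norm on the plane;
   that complete p-normed plane, with [0, x, y] sent to [0, e1, e2] by a 1-Lipschitz map,
   attains the bound. *)

Lemma rpow_0 e : rpow 0 e = 0.
Proof. unfold rpow; destruct (Rle_dec 0 0); lra. Qed.

Lemma rpow_pos x e : 0 < x -> rpow x e = Rpower x e.
Proof. intros; unfold rpow; destruct (Rle_dec x 0); lra. Qed.

Lemma rpow_gt0 x e : 0 < x -> 0 < rpow x e.
Proof. intros Hx; rewrite rpow_pos by exact Hx; apply exp_pos. Qed.

Lemma rpow_ge0 x e : 0 <= rpow x e.
Proof.
  destruct (Rle_dec x 0) as [Hx|Hx].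
  - unfold rpow; destruct (Rle_dec x 0); [lra | contradiction].
  - left; apply rpow_gt0; lra.
Qed.

Lemma rpow_le e x y : 0 < e -> 0 <= x <= y -> rpow x e <= rpow y e.
Proof.
  intros He [[Hx|<-] Hxy].
  - rewrite !rpow_pos by lra; apply Rle_Rpower_l; lra.
  - rewrite rpow_0; apply rpow_ge0.
Qed.

Lemma rpow_lt e x y : 0 < e -> 0 <= x < y -> rpow x e < rpow y e.
Proof.
  intros He [[Hx|<-] Hxy].
  - rewrite !rpow_pos by lra; apply Rlt_Rpower_l; lra.
  - rewrite rpow_0; apply rpow_gt0; lra.
Qed.

Lemma rpow_le_inv e x y : 0 < e -> 0 <= y -> rpow x e <= rpow y e -> x <= y.
Proof.
  intros He Hy H; destruct (Rle_dec x y) as [|Hxy]; [assumption|].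
  assert (rpow y e < rpow x e) by (apply rpow_lt; lra); lra.
Qed.

Lemma rpow_lt_inv e x y : 0 < e -> 0 <= x -> rpow x e < rpow y e -> x < y.
Proof.
  intros He Hx H; destruct (Rlt_dec x y) as [|Hxy]; [assumption|].
  assert (rpow y e <= rpow x e); [|lra].
  destruct (Rle_dec y 0).
  - unfold rpow at 1; destruct (Rle_dec y 0); [apply rpow_ge0 | contradiction].
  - apply rpow_le; lra.
Qed.

Lemma rpow_inv e x : e <> 0 -> 0 <= x -> rpow (rpow x e) (/ e) = x.
Proof.
  intros He [Hx|<-].
  - rewrite (rpow_pos x), rpow_pos by (auto; apply exp_pos).
    rewrite Rpower_mult, Rinv_r, Rpower_1; auto.
  - rewrite !rpow_0; reflexivity.
Qed.

Lemma rpow_inv_r e x : e <> 0 -> 0 <= x -> rpow (rpow x (/ e)) e = x.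
Proof.
  intros He Hx; rewrite <- (Rinv_inv e) at 2.
  apply rpow_inv; [apply Rinv_neq_0_compat|]; assumption.
Qed.

Lemma rpow_mult e x y : 0 <= x -> 0 <= y -> rpow (x * y) e = rpow x e * rpow y e.
Proof.
  intros [Hx|<-] [Hy|<-]; rewrite ?Rmult_0_l, ?Rmult_0_r, ?rpow_0; try ring.
  rewrite !rpow_pos by nra; symmetry; apply Rpower_mult_distr; assumption.
Qed.

(* Weighted AM-GM in exponential form, from [1 + s <= exp s] at [s = (1-p)L] and [s = -pL]. *)
Lemma exp_mult_le_affine p L : 0 <= p <= 1 -> exp (p * L) <= 1 - p + p * exp L.
Proof.
  intros Hp.
  assert (H1 := exp_ineq1_le ((1 - p) * L)).
  assert (H2 := exp_ineq1_le (- (p * L))).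
  assert (E1 : exp L = exp (p * L) * exp ((1 - p) * L))
    by (rewrite <- exp_plus; f_equal; ring).
  assert (E2 : exp (p * L) * exp (- (p * L)) = 1)
    by (rewrite <- exp_plus, Rplus_opp_r; apply exp_0).
  assert (HE := exp_pos (p * L)).
  assert (exp (p * L) * (1 + (1 - p) * L) <= exp L)
    by (rewrite E1; apply Rmult_le_compat_l; lra).
  assert (exp (p * L) * (1 + - (p * L)) <= 1)
    by (rewrite <- E2; apply Rmult_le_compat_l; lra).
  nra.
Qed.

Lemma rpow_le_tangent p x w : 0 <= p <= 1 -> 0 <= x -> 0 < w ->
  rpow x p <= rpow w p * (1 - p + p * (x / w)).
Proof.
  intros Hp [Hx|<-] Hw.
  - rewrite !rpow_pos by assumption; unfold Rpower.
    replace (x / w) with (exp (ln x - ln w))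
      by (unfold Rminus; rewrite exp_plus, exp_Ropp, !exp_ln; auto).
    replace (p * ln x) with (p * ln w + p * (ln x - ln w)) by ring.
    rewrite exp_plus; apply Rmult_le_compat_l; [left; apply exp_pos|].
    apply exp_mult_le_affine; assumption.
  - rewrite rpow_0, Rdiv_0_l, Rmult_0_r, Rplus_0_r.
    apply Rmult_le_pos; [apply rpow_ge0 | lra].
Qed.

Lemma rpow_concave p l u v : 0 <= p <= 1 -> 0 <= l <= 1 -> 0 <= u -> 0 <= v ->
  (1 - l) * rpow u p + l * rpow v p <= rpow ((1 - l) * u + l * v) p.
Proof.
  intros Hp Hl Hu Hv.
  set (w := (1 - l) * u + l * v).
  assert (Hzero : forall c s, c * s = 0 -> c * rpow s p = 0).
  { intros c s Hcs; destruct (Rmult_integral _ _ Hcs) as [->| ->];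
      [ring | rewrite rpow_0; ring]. }
  destruct (Rle_dec w 0) as [Hw|Hw].
  - assert (w = 0) as Hw0 by (unfold w in *; nra).
    rewrite Hw0, rpow_0, (Hzero (1 - l) u), (Hzero l v) by (unfold w in *; nra); lra.
  - assert (Hu' := rpow_le_tangent p u w Hp Hu ltac:(lra)).
    assert (Hv' := rpow_le_tangent p v w Hp Hv ltac:(lra)).
    apply Rle_trans with ((1 - l) * (rpow w p * (1 - p + p * (u / w)))
                          + l * (rpow w p * (1 - p + p * (v / w)))).
    + apply Rplus_le_compat; apply Rmult_le_compat_l; lra.
    + right; unfold w in *; field; lra.
Qed.

Lemma rpow_subadd p u v : 0 <= p <= 1 -> 0 <= u -> 0 <= v ->
  rpow (u + v) p <= rpow u p + rpow v p.
Proof.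
  intros Hp Hu Hv.
  destruct (Req_dec (u + v) 0) as [Hs|Hs].
  { rewrite Hs, rpow_0; pose proof (rpow_ge0 u p); pose proof (rpow_ge0 v p); lra. }
  set (s := u + v) in *.
  (* concavity between [0] and [s], where [rpow 0 p = 0] *)
  assert (Hpt : forall w, 0 <= w <= s -> w / s * rpow s p <= rpow w p).
  { intros w Hw.
    assert (Hl : 0 <= w / s <= 1).
    { unfold s in *; split; [apply Rdiv_le_0_compat | apply (Rdiv_le_1 w (u + v))]; lra. }
    pose proof (rpow_concave p (w / s) 0 s Hp Hl (Rle_refl 0) ltac:(unfold s; lra)) as H.
    rewrite rpow_0 in H; replace ((1 - w / s) * 0 + w / s * s) with w in H by (field; auto).
    lra. }
  pose proof (Hpt u ltac:(unfold s; lra)); pose proof (Hpt v ltac:(unfold s; lra)).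
  replace (rpow s p) with (u / s * rpow s p + v / s * rpow s p)
    by (unfold s in *; field; auto).
  lra.
Qed.

Definition absp (p u : R) : R := rpow (Rabs u) p.

Lemma absp_0 p : absp p 0 = 0.
Proof. unfold absp; rewrite Rabs_R0; apply rpow_0. Qed.

Lemma absp_ge0 p u : 0 <= absp p u.
Proof. apply rpow_ge0. Qed.

Lemma absp_opp p u : absp p (- u) = absp p u.
Proof. unfold absp; rewrite Rabs_Ropp; reflexivity. Qed.

Lemma absp_pos_eq p u : 0 <= u -> absp p u = rpow u p.
Proof. intros Hu; unfold absp; rewrite Rabs_pos_eq by exact Hu; reflexivity. Qed.

Lemma absp_le p u v : 0 < p -> Rabs u <= Rabs v -> absp p u <= absp p v.
Proof. intros; apply rpow_le; [assumption | split; [apply Rabs_pos | assumption]]. Qed.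

Lemma absp_mult p l u : absp p (l * u) = rpow (Rabs l) p * absp p u.
Proof. unfold absp; rewrite Rabs_mult; apply rpow_mult; apply Rabs_pos. Qed.

Lemma absp_add p u v : 0 < p <= 1 -> absp p (u + v) <= absp p u + absp p v.
Proof.
  intros Hp; unfold absp.
  apply Rle_trans with (rpow (Rabs u + Rabs v) p).
  - apply rpow_le; [lra | split; [apply Rabs_pos | apply Rabs_triang]].
  - apply rpow_subadd; [lra | apply Rabs_pos | apply Rabs_pos].
Qed.

Lemma absp_concave p l h1 h2 : 0 <= p <= 1 -> 0 <= l <= 1 -> 0 <= h1 * h2 ->
  (1 - l) * absp p h1 + l * absp p h2 <= absp p ((1 - l) * h1 + l * h2).
Proof.
  intros Hp Hl Hh; unfold absp.
  (* [h1] and [h2] have the same sign, so [Rabs] is affine on the segment between them *)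
  replace (Rabs ((1 - l) * h1 + l * h2)) with ((1 - l) * Rabs h1 + l * Rabs h2).
  - apply rpow_concave; [assumption | assumption | apply Rabs_pos | apply Rabs_pos].
  - destruct (Rle_dec 0 h1), (Rle_dec 0 h2).
    + rewrite !Rabs_pos_eq; nra.
    + assert (h1 = 0) as -> by nra; rewrite Rabs_R0, !Rabs_left1; nra.
    + assert (h2 = 0) as -> by nra; rewrite Rabs_R0, !Rabs_left1; nra.
    + rewrite !Rabs_left1; nra.
Qed.

Lemma exists_greatest {A : Type} (le : A -> A -> Prop) (P : A -> Prop) (l : list A) :
  (forall a b, le a b \/ le b a) -> (forall a b c, le a b -> le b c -> le a c) ->
  (exists a, In a l /\ P a) ->
  exists m, In m l /\ P m /\ forall a, In a l -> P a -> le a m.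
Proof.
  intros Htot Htrans; induction l as [|a0 l IH]; intros [a [Ha HPa]]; [destruct Ha|].
  destruct (classic (exists a, In a l /\ P a)) as [Hl|Hl].
  - destruct (IH Hl) as [m [Hm [HPm Hmax]]].
    destruct (classic (P a0 /\ le m a0)) as [[HP0 Hle]|H0].
    + exists a0; split; [left; reflexivity | split; [assumption|]].
      intros b [<-|Hb] HPb; [destruct (Htot a0 a0); assumption | eauto].
    + exists m; split; [right; assumption | split; [assumption|]].
      intros b [<-|Hb] HPb; [|auto].
      destruct (Htot a0 m); [assumption | tauto].
  - exists a0.
    assert (P a0) by (destruct Ha as [<-|Ha]; [assumption | exfalso; eauto]).
    split; [left; reflexivity | split; [assumption|]].
    intros b [<-|Hb] HPb; [destruct (Htot a0 a0); assumption | exfalso; eauto].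
Qed.

Section MinAtBreakpoints.

Variables (g : R -> R) (cs : list R).

Hypothesis g_between : forall t1 t2 t, t1 <= t <= t2 ->
  (forall c, In c cs -> c <= t1 \/ t2 <= c) -> Rmin (g t1) (g t2) <= g t.
Hypothesis g_left : forall t1 t, t <= t1 ->
  (forall c, In c cs -> t1 <= c) -> g t1 <= g t.
Hypothesis g_right : forall t1 t, t1 <= t ->
  (forall c, In c cs -> c <= t1) -> g t1 <= g t.

Lemma min_at_breakpoint t : cs <> nil -> exists c, In c cs /\ g c <= g t.
Proof.
  intros Hne.
  assert (Htot : forall a b : R, a <= b \/ b <= a) by (intros; lra).
  assert (Htot' : forall a b : R, a >= b \/ b >= a) by (intros; lra).
  assert (Hle := exists_greatest Rle (fun c => c <= t) cs Htot Rle_trans).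
  assert (Hge := exists_greatest Rge (fun c => t <= c) cs Htot' Rge_trans).
  destruct (classic (exists c, In c cs /\ c <= t)) as [Hlo|Hlo],
           (classic (exists c, In c cs /\ t <= c)) as [Hhi|Hhi].
  - destruct (Hle Hlo) as [lo [Hlo_in [Hlo_t Hlo_max]]].
    destruct (Hge Hhi) as [hi [Hhi_in [Hhi_t Hhi_min]]].
    assert (Hm : Rmin (g lo) (g hi) <= g t).
    { apply g_between; [lra|].
      intros c Hc; destruct (Htot c t); [left | right];
        [apply Hlo_max | apply Rge_le, Hhi_min]; assumption. }
    unfold Rmin in Hm; destruct (Rle_dec (g lo) (g hi)); eauto.
  - destruct (Hle Hlo) as [lo [Hlo_in [Hlo_t Hlo_max]]].
    exists lo; split; [assumption|]; apply g_right; [assumption|].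
    intros c Hc; apply Hlo_max; [assumption|].
    destruct (Htot c t); [assumption | exfalso; eauto].
  - destruct (Hge Hhi) as [hi [Hhi_in [Hhi_t Hhi_min]]].
    exists hi; split; [assumption|]; apply g_left; [assumption|].
    intros c Hc; apply Rge_le, Hhi_min; [assumption|].
    destruct (Htot c t); [exfalso; eauto | assumption].
  - destruct cs as [|c cs']; [contradiction|].
    destruct (Htot c t); exfalso; eauto using in_eq.
Qed.

End MinAtBreakpoints.

Definition cost (p : R) (nodes : list (R * R)) (t : R) : R :=
  fold_right (fun n s => absp p ((t - fst n) * snd n) + s) 0 nodes.

Section Cost.

Variables (p : R) (nodes : list (R * R)).
Hypothesis p_pos : 0 < p.
Hypothesis p_le1 : p <= 1.
Hypothesis weights_ge0 : forall n, In n nodes -> 0 <= snd n.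

Lemma cost_mono t1 t :
  (forall n, In n nodes -> Rabs (t1 - fst n) <= Rabs (t - fst n)) ->
  cost p nodes t1 <= cost p nodes t.
Proof.
  induction nodes as [|[c k] nodes' IH]; simpl; intros Hd; [lra|].
  apply Rplus_le_compat.
  - assert (0 <= k) by (apply (weights_ge0 (c, k)); left; reflexivity).
    apply absp_le; [assumption|].
    rewrite !Rabs_mult; apply Rmult_le_compat_r; [apply Rabs_pos|].
    apply (Hd (c, k)); left; reflexivity.
  - apply IH; [intros n Hn; apply weights_ge0 | intros n Hn; apply Hd]; right; assumption.
Qed.

Lemma cost_concave l t1 t2 : 0 <= l <= 1 ->
  (forall n, In n nodes -> 0 <= (t1 - fst n) * (t2 - fst n)) ->
  (1 - l) * cost p nodes t1 + l * cost p nodes t2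
    <= cost p nodes ((1 - l) * t1 + l * t2).
Proof.
  intros Hl; induction nodes as [|[c k] nodes' IH]; simpl; intros Hs; [lra|].
  assert (0 <= k) by (apply (weights_ge0 (c, k)); left; reflexivity).
  assert (0 <= (t1 - c) * (t2 - c)) by (apply (Hs (c, k)); left; reflexivity).
  assert (IH' := IH (fun n Hn => weights_ge0 n (or_intror Hn))
                    (fun n Hn => Hs n (or_intror Hn))).
  replace (((1 - l) * t1 + l * t2 - c) * k)
    with ((1 - l) * ((t1 - c) * k) + l * ((t2 - c) * k)) by ring.
  assert ((1 - l) * absp p ((t1 - c) * k) + l * absp p ((t2 - c) * k)
          <= absp p ((1 - l) * ((t1 - c) * k) + l * ((t2 - c) * k))).
  { apply absp_concave; [lra | assumption|].
    replace ((t1 - c) * k * ((t2 - c) * k)) with ((t1 - c) * (t2 - c) * (k * k)) by ring.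
    apply Rmult_le_pos; nra. }
  lra.
Qed.

Lemma cost_min_at_node t : nodes <> nil ->
  exists n, In n nodes /\ cost p nodes (fst n) <= cost p nodes t.
Proof.
  intros Hne.
  destruct (min_at_breakpoint (cost p nodes) (map fst nodes)) with (t := t)
    as [c [Hc Hmin]].
  - intros t1 t2 s Hs Hgap.
    destruct (Req_dec t1 t2) as [<-|Ht12].
    { replace s with t1 by lra; apply Rmin_l. }
    set (l := (s - t1) / (t2 - t1)).
    assert (Hl : 0 <= l <= 1).
    { unfold l; split; [apply Rdiv_le_0_compat | apply (Rdiv_le_1 (s - t1))]; lra. }
    replace s with ((1 - l) * t1 + l * t2) by (unfold l; field; lra).
    assert (Hconc : (1 - l) * cost p nodes t1 + l * cost p nodes t2
                    <= cost p nodes ((1 - l) * t1 + l * t2)).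
    { apply cost_concave; [assumption|]; intros n Hn.
      destruct (Hgap (fst n) (in_map fst _ _ Hn)); nra. }
    pose proof (Rmin_l (cost p nodes t1) (cost p nodes t2)).
    pose proof (Rmin_r (cost p nodes t1) (cost p nodes t2)); nra.
  - intros t1 s Hs Hleft; apply cost_mono; intros n Hn.
    assert (t1 <= fst n) by exact (Hleft _ (in_map fst _ _ Hn)).
    rewrite !Rabs_left1; lra.
  - intros t1 s Hs Hright; apply cost_mono; intros n Hn.
    assert (fst n <= t1) by exact (Hright _ (in_map fst _ _ Hn)).
    rewrite !Rabs_pos_eq; lra.
  - destruct nodes; [contradiction | discriminate].
  - apply in_map_iff in Hc; destruct Hc as [n [<- Hn]]; eauto.
Qed.

End Cost.

Definition normp3 (p dx dy dxy a b : R) : R :=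
  Rmin (absp p (a * dx) + absp p (b * dy))
    (Rmin (absp p ((a + b) * dx) + absp p (b * dxy))
          (absp p ((a + b) * dy) + absp p (a * dxy))).

(* [cost p (nodes3 dx dy dxy a b) t] prices the representation
   [a δ(x) + b δ(y) = t (δ(x) - δ(y)) + (b + t) δ(y) + (a - t) δ(x)]. *)
Definition nodes3 (dx dy dxy a b : R) : list (R * R) :=
  (0, dxy) :: (- b, dy) :: (a, dx) :: nil.

Lemma normp3_ge0 p dx dy dxy a b : 0 <= normp3 p dx dy dxy a b.
Proof.
  unfold normp3; repeat apply Rmin_glb; apply Rplus_le_le_0_compat; apply absp_ge0.
Qed.

Lemma normp3_scale p dx dy dxy l a b :
  normp3 p dx dy dxy (l * a) (l * b) = rpow (Rabs l) p * normp3 p dx dy dxy a b.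
Proof.
  assert (Hmin : forall u v, Rmin (rpow (Rabs l) p * u) (rpow (Rabs l) p * v)
                             = rpow (Rabs l) p * Rmin u v).
  { intros u v; symmetry; apply Rmult_min_distr_l, rpow_ge0. }
  unfold normp3; rewrite <- !Hmin, !Rmult_plus_distr_l, <- !absp_mult.
  replace (l * a + l * b) with (l * (a + b)) by ring.
  rewrite !Rmult_assoc; reflexivity.
Qed.

Section NormAsMinimalCost.

Variables (p dx dy dxy : R).
Hypothesis p_pos : 0 < p.
Hypothesis p_le1 : p <= 1.
Hypothesis dx_ge0 : 0 <= dx.
Hypothesis dy_ge0 : 0 <= dy.
Hypothesis dxy_ge0 : 0 <= dxy.

Lemma normp3_min_cost a b :
  normp3 p dx dy dxy a b = Rmin (cost p (nodes3 dx dy dxy a b) 0)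
    (Rmin (cost p (nodes3 dx dy dxy a b) (- b)) (cost p (nodes3 dx dy dxy a b) a)).
Proof.
  unfold normp3, cost, nodes3; simpl.
  rewrite !Rminus_0_r, !Rminus_diag, !Rmult_0_l, !absp_0, !Rplus_0_r, !Rplus_0_l.
  replace ((0 - - b) * dy) with (b * dy) by ring.
  replace ((0 - a) * dx) with (- (a * dx)) by ring.
  replace (- b * dxy) with (- (b * dxy)) by ring.
  replace ((- b - a) * dx) with (- ((a + b) * dx)) by ring.
  replace ((a - - b) * dy) with ((a + b) * dy) by ring.
  rewrite !absp_opp; f_equal; [ring | f_equal; ring].
Qed.

Lemma normp3_le_cost a b t : normp3 p dx dy dxy a b <= cost p (nodes3 dx dy dxy a b) t.
Proof.
  destruct (cost_min_at_node p (nodes3 dx dy dxy a b) p_pos p_le1) with (t := t)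
    as [n [Hn Hmin]].
  - intros n [<-|[<-|[<-|[]]]]; assumption.
  - discriminate.
  - rewrite normp3_min_cost; eapply Rle_trans; [|exact Hmin].
    destruct Hn as [<-|[<-|[<-|[]]]]; simpl fst.
    + apply Rmin_l.
    + eapply Rle_trans; [apply Rmin_r | apply Rmin_l].
    + eapply Rle_trans; [apply Rmin_r | apply Rmin_r].
Qed.

Lemma normp3_attained a b : exists t, normp3 p dx dy dxy a b = cost p (nodes3 dx dy dxy a b) t.
Proof.
  rewrite normp3_min_cost; unfold Rmin.
  repeat destruct (Rle_dec _ _); eauto.
Qed.

(* The infimum over [t] of the jointly subadditive [cost] is subadditive in [(a, b)]. *)
Lemma normp3_add a b a' b' :
  normp3 p dx dy dxy (a + a') (b + b')
    <= normp3 p dx dy dxy a b + normp3 p dx dy dxy a' b'.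
Proof.
  destruct (normp3_attained a b) as [t ->], (normp3_attained a' b') as [t' ->].
  apply Rle_trans with (cost p (nodes3 dx dy dxy (a + a') (b + b')) (t + t'));
    [apply normp3_le_cost|].
  unfold cost, nodes3; simpl.
  replace ((t + t' - 0) * dxy) with ((t - 0) * dxy + (t' - 0) * dxy) by ring.
  replace ((t + t' - - (b + b')) * dy) with ((t - - b) * dy + (t' - - b') * dy) by ring.
  replace ((t + t' - (a + a')) * dx) with ((t - a) * dx + (t' - a') * dx) by ring.
  pose proof (absp_add p ((t - 0) * dxy) ((t' - 0) * dxy) (conj p_pos p_le1)).
  pose proof (absp_add p ((t - - b) * dy) ((t' - - b') * dy) (conj p_pos p_le1)).
  pose proof (absp_add p ((t - a) * dx) ((t' - a') * dx) (conj p_pos p_le1)).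
  lra.
Qed.

Lemma normp3_lower m a b : 0 <= m -> m <= dx -> m <= dy -> m <= dxy ->
  absp p (a * m) <= normp3 p dx dy dxy a b /\ absp p (b * m) <= normp3 p dx dy dxy a b.
Proof.
  intros Hm Hmx Hmy Hmxy.
  assert (Hw : forall u k, m <= k -> absp p (u * m) <= absp p (u * k)).
  { intros u k Hk; apply absp_le; [assumption|].
    rewrite !Rabs_mult, (Rabs_pos_eq m), (Rabs_pos_eq k) by lra.
    apply Rmult_le_compat_l; [apply Rabs_pos | assumption]. }
  assert (Hdiff : forall u v k k', m <= k -> m <= k' ->
            absp p ((u - v) * m) <= absp p (u * k) + absp p (v * k')).
  { intros u v k k' Hk Hk'.
    replace ((u - v) * m) with (u * m + - (v * m)) by ring.
    eapply Rle_trans; [apply absp_add; lra|].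
    rewrite absp_opp; apply Rplus_le_compat; apply Hw; assumption. }
  destruct (normp3_attained a b) as [t ->]; unfold cost, nodes3; simpl.
  pose proof (absp_ge0 p ((t - 0) * dxy)); pose proof (absp_ge0 p ((t - - b) * dy));
    pose proof (absp_ge0 p ((t - a) * dx)).
  split.
  - replace a with ((t - 0) - (t - a)) at 1 by ring.
    pose proof (Hdiff (t - 0) (t - a) dxy dx Hmxy Hmx); lra.
  - replace b with ((t - - b) - (t - 0)) at 1 by ring.
    pose proof (Hdiff (t - - b) (t - 0) dy dxy Hmy Hmxy); lra.
Qed.

End NormAsMinimalCost.

Lemma absp_small p k eta : 0 < p -> 0 <= k -> 0 < eta ->
  exists delta, 0 < delta /\ forall u, Rabs u < delta -> absp p (u * k) < eta.
Proof.
  intros Hp Hk Heta.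
  set (r := rpow eta (/ p)).
  assert (Hr : 0 < r) by (apply rpow_gt0; assumption).
  exists (r / (k + 1)); split; [apply Rdiv_lt_0_compat; lra|].
  intros u Hu; rewrite <- (rpow_inv_r p eta) by lra; fold r.
  apply rpow_lt; [assumption|]; split; [apply Rabs_pos|].
  rewrite Rabs_mult, (Rabs_pos_eq k) by assumption.
  apply (Rmult_lt_compat_r (k + 1)) in Hu; [|lra].
  unfold Rdiv in Hu; rewrite Rmult_assoc, Rinv_l, Rmult_1_r in Hu by lra.
  pose proof (Rabs_pos u); nra.
Qed.

Definition plane : ModuleSpace R_Ring :=
  prod_ModuleSpace R_Ring R_ModuleSpace R_ModuleSpace.

Definition norm3 (p dx dy dxy : R) (v : plane) : R :=
  rpow (normp3 p dx dy dxy (fst v) (snd v)) (/ p).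

Section ThreePointSpace.

Variables (p dx dy dxy : R).
Hypothesis p_pos : 0 < p.
Hypothesis p_le1 : p <= 1.
Hypothesis dx_pos : 0 < dx.
Hypothesis dy_pos : 0 < dy.
Hypothesis dxy_pos : 0 < dxy.

Let N := norm3 p dx dy dxy.
Let m := Rmin dx (Rmin dy dxy).

Let m_pos : 0 < m.
Proof. unfold m; repeat apply Rmin_glb_lt; assumption. Qed.

Let m_le : m <= dx /\ m <= dy /\ m <= dxy.
Proof.
  unfold m; pose proof (Rmin_l dx (Rmin dy dxy)); pose proof (Rmin_r dx (Rmin dy dxy));
    pose proof (Rmin_l dy dxy); pose proof (Rmin_r dy dxy); lra.
Qed.

Lemma norm3_nonneg v : 0 <= N v.
Proof. apply rpow_ge0. Qed.

Lemma norm3_pow v : rpow (N v) p = normp3 p dx dy dxy (fst v) (snd v).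
Proof. apply rpow_inv_r; [lra | apply normp3_ge0]. Qed.

Lemma norm3_le v D : 0 <= D -> normp3 p dx dy dxy (fst v) (snd v) <= rpow D p -> N v <= D.
Proof. intros HD H; apply (rpow_le_inv p); [assumption | assumption | rewrite norm3_pow; assumption]. Qed.

Lemma norm3_ge_coords v : m * Rabs (fst v) <= N v /\ m * Rabs (snd v) <= N v.
Proof.
  pose proof m_pos; pose proof m_le.
  destruct (normp3_lower p dx dy dxy p_pos p_le1 m (fst v) (snd v)) as [Ha Hb]; try lra.
  rewrite <- norm3_pow in Ha, Hb; unfold absp in Ha, Hb.
  rewrite Rabs_mult, (Rabs_pos_eq m), Rmult_comm in Ha, Hb by lra.
  split; apply (rpow_le_inv p); auto using norm3_nonneg.
Qed.

Lemma norm3_zero v : N v = 0 <-> v = zero.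
Proof.
  pose proof m_pos as Hm.
  destruct v as [a b]; split.
  - intros H; destruct (norm3_ge_coords (a, b)) as [Ha Hb]; rewrite H in Ha, Hb; simpl in Ha, Hb.
    assert (Rabs a <= 0) by (apply (Rmult_le_reg_l m); lra).
    assert (Rabs b <= 0) by (apply (Rmult_le_reg_l m); lra).
    rewrite (Rabs_eq_0 a), (Rabs_eq_0 b) by (pose proof (Rabs_pos a); pose proof (Rabs_pos b); lra).
    reflexivity.
  - intros H; injection H as -> ->.
    assert (normp3 p dx dy dxy 0 0 <= 0).
    { eapply Rle_trans; [apply Rmin_l|]; rewrite !Rmult_0_l, absp_0; lra. }
    change (rpow (normp3 p dx dy dxy 0 0) (/ p) = 0).
    replace (normp3 p dx dy dxy 0 0) with 0 by (pose proof (normp3_ge0 p dx dy dxy 0 0); lra).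
    apply rpow_0.
Qed.

Lemma norm3_hom t v : N (scal t v) = Rabs t * N v.
Proof.
  destruct v as [a b]; unfold N, norm3.
  change (rpow (normp3 p dx dy dxy (t * a) (t * b)) (/ p)
          = Rabs t * rpow (normp3 p dx dy dxy a b) (/ p)).
  rewrite normp3_scale, rpow_mult, rpow_inv by (lra || apply Rabs_pos || apply rpow_ge0 || apply normp3_ge0).
  reflexivity.
Qed.

Lemma norm3_ptri v w : rpow (N (plus v w)) p <= rpow (N v) p + rpow (N w) p.
Proof.
  rewrite !norm3_pow; destruct v as [a b], w as [a' b'].
  apply normp3_add; lra.
Qed.

Lemma norm3_complete (u : nat -> plane) :
  (forall eps, 0 < eps -> exists K : nat, forall i j : nat,
     (K <= i)%nat -> (K <= j)%nat -> N (minus (u i) (u j)) < eps) ->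
  exists l, forall eps, 0 < eps -> exists K : nat, forall n : nat,
     (K <= n)%nat -> N (minus (u n) l) < eps.
Proof.
  intros Hu.
  pose proof m_pos as Hm.
  assert (Hcauchy : forall w : nat -> R,
            (forall i j, m * Rabs (w i - w j) <= N (minus (u i) (u j))) -> Cauchy_crit w).
  { intros w Hw eps Heps; destruct (Hu (m * eps)) as [K HK]; [nra|].
    exists K; intros i j Hi Hj; unfold Rdist.
    specialize (HK i j Hi Hj); specialize (Hw i j).
    apply (Rmult_lt_reg_l m); lra. }
  destruct (Rcomplete.R_complete (fun n => fst (u n))) as [la Hla];
    [apply Hcauchy; intros i j; apply (norm3_ge_coords (minus (u i) (u j)))|].
  destruct (Rcomplete.R_complete (fun n => snd (u n))) as [lb Hlb];
    [apply Hcauchy; intros i j; apply (norm3_ge_coords (minus (u i) (u j)))|].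
  exists ((la, lb) : plane); intros eps Heps.
  assert (Heta : 0 < rpow eps p / 2) by (pose proof (rpow_gt0 eps p Heps); lra).
  destruct (absp_small p dx _ p_pos ltac:(lra) Heta) as [da [Hda Hsmall_a]].
  destruct (absp_small p dy _ p_pos ltac:(lra) Heta) as [db [Hdb Hsmall_b]].
  destruct (Hla da Hda) as [Ka HKa], (Hlb db Hdb) as [Kb HKb].
  exists (Nat.max Ka Kb); intros n Hn.
  apply (rpow_lt_inv p); [assumption | apply norm3_nonneg|].
  rewrite norm3_pow; eapply Rle_lt_trans; [apply Rmin_l|].
  specialize (Hsmall_a (fst (u n) - la) (HKa n ltac:(lia))).
  specialize (Hsmall_b (snd (u n) - lb) (HKb n ltac:(lia))).
  change (absp p ((fst (u n) - la) * dx) + absp p ((snd (u n) - lb) * dy) < rpow eps p).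
  lra.
Qed.

Lemma norm3_e1 : N (minus (1, 0) (0, 0)) <= dx.
Proof.
  apply norm3_le; [lra|]; eapply Rle_trans; [apply Rmin_l|].
  change (absp p ((1 - 0) * dx) + absp p ((0 - 0) * dy) <= rpow dx p).
  rewrite !Rminus_0_r, Rmult_0_l, Rmult_1_l, absp_0, absp_pos_eq by lra; lra.
Qed.

Lemma norm3_e2 : N (minus (0, 1) (0, 0)) <= dy.
Proof.
  apply norm3_le; [lra|]; eapply Rle_trans; [apply Rmin_l|].
  change (absp p ((0 - 0) * dx) + absp p ((1 - 0) * dy) <= rpow dy p).
  rewrite !Rminus_0_r, Rmult_0_l, Rmult_1_l, absp_0, absp_pos_eq by lra; lra.
Qed.

Lemma norm3_e1_e2 : N (minus (1, 0) (0, 1)) <= dxy.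
Proof.
  apply norm3_le; [lra|]; eapply Rle_trans; [apply Rmin_r | eapply Rle_trans; [apply Rmin_l|]].
  change (absp p ((1 - 0 + (0 - 1)) * dx) + absp p ((0 - 1) * dxy) <= rpow dxy p).
  replace (1 - 0 + (0 - 1)) with 0 by ring; replace ((0 - 1) * dxy) with (- dxy) by ring.
  rewrite Rmult_0_l, absp_0, absp_opp, absp_pos_eq by lra; lra.
Qed.

Definition three_point_space : pBanach p :=
  mkPBanach p plane N norm3_nonneg norm3_zero norm3_hom norm3_ptri norm3_complete.

End ThreePointSpace.

Lemma scal_plus_rebase {K : Ring} {W : ModuleSpace K} (a b : K) (u w : W) :
  plus (scal a u) (scal b w) = plus (scal (plus a b) u) (scal b (minus w u)).
Proof.
  rewrite scal_distr_r, scal_minus_distr_l; unfold minus.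
  rewrite <- !plus_assoc; f_equal.
  rewrite (plus_comm (scal b w)), plus_assoc, (@plus_opp_r (ModuleSpace.AbelianGroup K W)).
  rewrite plus_zero_l; reflexivity.
Qed.

Section PBanachBounds.

Variables (p : R) (Y : pBanach p).
Hypothesis p_pos : 0 < p.

Lemma pb_norm_minus_sym (u w : Y) : pb_norm Y (minus u w) = pb_norm Y (minus w u).
Proof.
  rewrite <- opp_minus, <- scal_opp_one, pb_hom.
  replace (Rabs (opp one)) with 1 by (symmetry; apply (abs_opp_one (K := R_AbsRing))).
  ring.
Qed.

Lemma pb_norm_comb_le a b (u w : Y) Du Dw :
  pb_norm Y u <= Du -> pb_norm Y w <= Dw ->
  rpow (pb_norm Y (plus (scal a u) (scal b w))) p <= absp p (a * Du) + absp p (b * Dw).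
Proof.
  intros Hu Hw; eapply Rle_trans; [apply pb_ptri|]; rewrite !pb_hom.
  assert (Hterm : forall t (v : Y) D, pb_norm Y v <= D ->
                    rpow (Rabs t * pb_norm Y v) p <= absp p (t * D)).
  { intros t v D Hv; unfold absp; pose proof (pb_nonneg p Y v).
    rewrite Rabs_mult, (Rabs_pos_eq D) by lra.
    apply rpow_le; [assumption|]; split.
    - apply Rmult_le_pos; [apply Rabs_pos | assumption].
    - apply Rmult_le_compat_l; [apply Rabs_pos | assumption]. }
  apply Rplus_le_compat; apply Hterm; assumption.
Qed.

(* Each of the three terms of [normp3] is the p-triangle inequality for one way of
   writing [a u + b w] as a combination of [u], [w] and [u - w]. *)
Lemma pb_norm_comb_le_normp3 a b (u w : Y) dx dy dxy :
  pb_norm Y u <= dx -> pb_norm Y w <= dy -> pb_norm Y (minus u w) <= dxy ->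
  rpow (pb_norm Y (plus (scal a u) (scal b w))) p <= normp3 p dx dy dxy a b.
Proof.
  intros Hu Hw Huw; apply Rmin_glb; [|apply Rmin_glb].
  - apply pb_norm_comb_le; assumption.
  - rewrite scal_plus_rebase; apply pb_norm_comb_le; [assumption|].
    rewrite pb_norm_minus_sym; assumption.
  - rewrite plus_comm, scal_plus_rebase, (Rplus_comm a b).
    apply pb_norm_comb_le; assumption.
Qed.

Lemma lipschitz_three_points {T : Type} (d : T -> T -> R) (z x y : T) (f : T -> Y) :
  is_pmetric p d -> (forall u, u = z \/ u = x \/ u = y) ->
  pb_norm Y (minus (f x) (f z)) <= d x z -> pb_norm Y (minus (f y) (f z)) <= d y z ->
  pb_norm Y (minus (f x) (f y)) <= d x y ->
  forall u v, pb_norm Y (minus (f u) (f v)) <= d u v.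
Proof.
  intros [Dnn [_ [Dsym _]]] Hall Hxz Hyz Hxy.
  assert (Hdiag : forall u, pb_norm Y (minus (f u) (f u)) <= d u u).
  { intros u; rewrite (proj2 (pb_zero p Y _) (minus_eq_zero (f u))); apply Dnn. }
  assert (Hsym : forall u v, pb_norm Y (minus (f u) (f v)) <= d u v ->
                             pb_norm Y (minus (f v) (f u)) <= d v u).
  { intros u v; rewrite pb_norm_minus_sym, Dsym; tauto. }
  intros u v; destruct (Hall u) as [-> | [-> | ->]], (Hall v) as [-> | [-> | ->]]; auto.
Qed.

End PBanachBounds.

Lemma Fp_values_two_point_le p {T : Type} (d : T -> T -> R) (z x y : T) a b s :
  0 < p -> Fp_values p d z ((a, x) :: (b, y) :: nil) s ->
  rpow s p <= normp3 p (d x z) (d y z) (d x y) a b.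
Proof.
  intros Hp [Y [f [Hfz [Hlip ->]]]]; simpl eval_comb; rewrite plus_zero_r.
  assert (Hbound : forall u, pb_norm Y (f u) <= d u z).
  { intros u; specialize (Hlip u z).
    rewrite Hfz, (@minus_zero_r (ModuleSpace.AbelianGroup _ (pb_space p Y))) in Hlip.
    assumption. }
  apply pb_norm_comb_le_normp3; auto.
Qed.

Definition three_point_map {T : Type} (z x : T) (u : T) : plane :=
  if excluded_middle_informative (u = z) then (0, 0)
  else if excluded_middle_informative (u = x) then (1, 0) else (0, 1).

Lemma Fp_values_three_point p {T : Type} (d : T -> T -> R) (z x y : T) a b :
  0 < p -> p <= 1 -> is_pmetric p d ->
  x <> z -> y <> z -> x <> y -> (forall u, u = z \/ u = x \/ u = y) ->
  Fp_values p d z ((a, x) :: (b, y) :: nil)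
    (rpow (normp3 p (d x z) (d y z) (d x y) a b) (/ p)).
Proof.
  intros Hp Hp1 Hd Hxz Hyz Hxy Hall.
  pose proof Hd as [Dnn [Deq _]].
  assert (Hpos : forall u v, u <> v -> 0 < d u v).
  { intros u v Huv; destruct (Dnn u v) as [|H0]; [assumption|].
    exfalso; apply Huv, Deq; auto. }
  set (Y := three_point_space p (d x z) (d y z) (d x y) Hp Hp1
              (Hpos _ _ Hxz) (Hpos _ _ Hyz) (Hpos _ _ Hxy)).
  set (f := three_point_map z x : T -> Y).
  assert (fz : f z = (0, 0)).
  { unfold f, three_point_map; destruct (excluded_middle_informative (z = z)); congruence. }
  assert (fx : f x = (1, 0)).
  { unfold f, three_point_map.
    destruct (excluded_middle_informative (x = z)), (excluded_middle_informative (x = x)); congruence. }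
  assert (fy : f y = (0, 1)).
  { unfold f, three_point_map.
    destruct (excluded_middle_informative (y = z)), (excluded_middle_informative (y = x)); congruence. }
  exists Y, f; split; [|split].
  - rewrite fz; reflexivity.
  - apply (lipschitz_three_points p Y d z x y f Hd Hall); rewrite ?fz, ?fx, ?fy.
    + exact (norm3_e1 _ _ _ _ Hp (Hpos _ _ Hxz)).
    + exact (norm3_e2 _ _ _ _ Hp (Hpos _ _ Hyz)).
    + exact (norm3_e1_e2 _ _ _ _ Hp (Hpos _ _ Hxy)).
  - simpl eval_comb; rewrite fx, fy.
    replace (plus (scal a ((1, 0) : plane)) (plus (scal b ((0, 1) : plane)) zero))
      with ((a, b) : plane) by (apply injective_projections; cbn; ring).
    reflexivity.
Qed.

Theorem corollary2p7 (p : R) (T : Type) (d : T -> T -> R) (z x y : T) :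
  0 < p -> p <= 1 ->
  is_pmetric p d ->
  x <> z -> y <> z -> x <> y ->
  (forall u : T, u = z \/ u = x \/ u = y) ->
  forall a b : R,
  exists r : R,
    Fp_norm p d z ((a, x) :: (b, y) :: nil) = Finite r /\ 0 <= r /\
    rpow r p =
      Rmin (rpow (Rabs (a * d x z)) p + rpow (Rabs (b * d y z)) p)
        (Rmin (rpow (Rabs ((a + b) * d x z)) p + rpow (Rabs (b * d x y)) p)
              (rpow (Rabs ((a + b) * d y z)) p + rpow (Rabs (a * d x y)) p)).
Proof.
  intros Hp Hp1 Hd Hxz Hyz Hxy Hall a b.
  set (M := normp3 p (d x z) (d y z) (d x y) a b).
  assert (HM : 0 <= M) by apply normp3_ge0.
  exists (rpow M (/ p)); split; [|split].
  - apply is_lub_Rbar_unique; split.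
    + intros s Hs; simpl.
      apply (rpow_le_inv p); [assumption | apply rpow_ge0|].
      rewrite rpow_inv_r by lra.
      apply (Fp_values_two_point_le p d z x y); assumption.
    + intros l Hl; apply Hl, Fp_values_three_point; assumption.
  - apply rpow_ge0.
  - rewrite rpow_inv_r by lra; reflexivity.
Qed.
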